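(* Let $\Gamma_{\ge1}$ be a set of letters of arity at least $1$ and $\Gamma_0$ a set of constants, and consider the following nondeterministic procedure on a context equation $u=v$. (1) For each variable $x$: guess whether $x$ is to be replaced by a constant and if so guess a constant $c\in\Gamma_0$ and replace every occurrence of $x$ by $c$. (2) For each context variable $X$: guess a letter $f$ (intended as the last letter of $\sigma(X)$); if $f\in\Gamma_{\ge1}$ and the current equation contains a subterm $X(a)$ with $a\in\Gamma_0$, let $m=\mathrm{ar}(f)$, guess $1\le i\le m$, and replace every subterm $X(s)$ by $X(f(x_1,\dots,x_{i-1},s,x_{i+1},\dots,x_m))$ with fresh variables $x_1,\dots,x_{i-1},x_{i+1},\dots,x_m$ (the same for all occurrences of $X$); then guess whether $X$ is removed, in which case replace each $X(s)$ by $s$. (3) For each variable introduced in step (2), act as in step (1). Then: (a) whatever the choices, if the resulting equation $u'=v'$ has a solution, so does $u=v$; (b) if $u=v$ has a non-empty solution $\sigma$, then for some choices the resulting equation $u'=v'$ has a non-empty solution $\sigma'$ such that $\sigma'(u')=\sigma(u)$ and there is no crossing father-leaf pair $(f,a)$ with $f\in\Gamma_{\ge1}$ and $a\in\Gamma_0$ with respect to $\sigma'$.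
   Context: $\Sigma$ is a ranked signature, $\Omega\notin\Sigma$ a special constant; context variables have arity $1$, variables arity $0$. Ground terms, ground contexts (exactly one $\Omega$), terms and context equations $u=v$ are as usual; a substitution $\sigma$ assigns ground contexts to context variables and ground terms to variables, extended by $\sigma(a)=a$, $\sigma(f(t_1,\dots,t_m))=f(\sigma(t_1),\dots,\sigma(t_m))$, $\sigma(Xt)=\sigma(X)\sigma(t)$; a solution satisfies $\sigma(u)=\sigma(v)$; it is non-empty if $\sigma(X)\neq\Omega$ for every context variable $X$ occurring in the equation. The last letter of $\sigma(X)$ is the label of the father of $\Omega$ in $\sigma(X)$. Each node of $\sigma(u)$ comes either from an explicit letter occurrence of $u$ or from $\sigma(X)$ or $\sigma(x)$ for a particular occurrence of $X$ or $x$. An occurrence in $\sigma(u)$ or $\sigma(v)$ of a node labelled $f$ ($\mathrm{ar}(f)\ge1$) with a child labelled by a constant $a$ is explicit if both come from explicit letters, implicit if both come from the same $\sigma(X)$ or $\sigma(x)$, and crossing otherwise; $(f,a)$ is a crossing father-leaf pair w.r.t. $\sigma$ if it has a crossing occurrence. *)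

From Stdlib Require Import List Arith.
Import ListNotations.
Set Implicit Arguments.

Section Defs.
(* Ranked signature Sigma: letters of type L with arity ar.
   The special constant Omega is represented by [None] in ground trees.
   Variables and context variables are named by natural numbers. *)
Variable L : Type.
Variable ar : L -> nat.

Inductive gtree : Type := gnode : option L -> list gtree -> gtree.

Inductive wf_g : gtree -> Prop :=
| wfg_omega : wf_g (gnode None [])
| wfg_node f ts : length ts = ar f -> (forall t, In t ts -> wf_g t) ->
                  wf_g (gnode (Some f) ts).

Fixpoint holes (t : gtree) : nat :=
  match t with
  | gnode o ts => (match o with None => 1 | Some _ => 0 end)
                  + list_sum (map holes ts)
  end.

Definition is_gterm (t : gtree) : Prop := wf_g t /\ holes t = 0.
Definition is_gctx (t : gtree) : Prop := wf_g t /\ holes t = 1.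
Definition Omega : gtree := gnode None [].

Fixpoint plug (c s : gtree) : gtree :=
  match c with
  | gnode None _ => s
  | gnode (Some f) cs => gnode (Some f) (map (fun c' => plug c' s) cs)
  end.

Inductive term : Type :=
| Var : nat -> term
| CVar : nat -> term -> term
| App : L -> list term -> term.

Inductive wf_t : term -> Prop :=
| wft_var x : wf_t (Var x)
| wft_cvar X t : wf_t t -> wf_t (CVar X t)
| wft_app f ts : length ts = ar f -> (forall t, In t ts -> wf_t t) ->
                 wf_t (App f ts).

Inductive subterm : term -> term -> Prop :=
| st_refl t : subterm t t
| st_cvar s X t : subterm s t -> subterm s (CVar X t)
| st_app s f ts t : In t ts -> subterm s t -> subterm s (App f ts).

Definition eqn : Type := (term * term)%type.
Definition map_eq (F : term -> term) (e : eqn) : eqn := (F (fst e), F (snd e)).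
Definition subterm_eq (s : term) (e : eqn) : Prop :=
  subterm s (fst e) \/ subterm s (snd e).
Definition occurs_var (x : nat) (e : eqn) : Prop := subterm_eq (Var x) e.
Definition occurs_cvar (X : nat) (e : eqn) : Prop :=
  exists s, subterm_eq (CVar X s) e.

Record subst : Type := Subst { sX : nat -> gtree ; sx : nat -> gtree }.

Definition valid_subst (s : subst) : Prop :=
  (forall X, is_gctx (sX s X)) /\ (forall x, is_gterm (sx s x)).

Fixpoint apply (s : subst) (t : term) : gtree :=
  match t with
  | Var x => sx s x
  | CVar X t' => plug (sX s X) (apply s t')
  | App f ts => gnode (Some f) (map (apply s) ts)
  end.

Definition solution (s : subst) (e : eqn) : Prop :=
  valid_subst s /\ apply s (fst e) = apply s (snd e).

Definition nonempty_solution (s : subst) (e : eqn) : Prop :=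
  solution s e /\ forall X, occurs_cvar X e -> sX s X <> Omega.

(* A node of sigma(u) comes from an explicit letter of u ([Expl]) or from
   sigma(X) / sigma(x) for the occurrence of X / x at position p of u. *)
Inductive origin : Type := Expl | Occ : list nat -> origin.

Inductive atree : Type := anode : option L -> origin -> list atree -> atree.

Fixpoint ann (o : origin) (t : gtree) : atree :=
  match t with gnode l ts => anode l o (map (ann o) ts) end.

Fixpoint aplug (c s : atree) : atree :=
  match c with
  | anode None _ _ => s
  | anode (Some f) o cs => anode (Some f) o (map (fun c' => aplug c' s) cs)
  end.

(* annotated evaluation of sigma(t), t sitting at position p;
   the argument of a context variable is its child 0, the arguments of
   a letter are its children 0,1,... *)
Fixpoint aeval (s : subst) (p : list nat) (t : term) : atree :=
  match t with
  | Var x => ann (Occ p) (sx s x)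
  | CVar X t' => aplug (ann (Occ p) (sX s X)) (aeval s (p ++ [0]) t')
  | App f ts =>
      anode (Some f) Expl
        ((fix go (i : nat) (l : list term) : list atree :=
            match l with
            | [] => []
            | t' :: l' => aeval s (p ++ [i]) t' :: go (S i) l'
            end) 0 ts)
  end.

Inductive asubtree : atree -> atree -> Prop :=
| ast_refl t : asubtree t t
| ast_child s l o ts t : In t ts -> asubtree s t -> asubtree s (anode l o ts).

Definition explicit_occ (o o' : origin) : Prop := o = Expl /\ o' = Expl.
Definition implicit_occ (o o' : origin) : Prop :=
  exists p, o = Occ p /\ o' = Occ p.

Definition crossing_in (T : atree) (f a : L) : Prop :=
  1 <= ar f /\ ar a = 0 /\
  exists o ts o' ds,
    asubtree (anode (Some f) o ts) T /\ In (anode (Some a) o' ds) ts /\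
    ~ explicit_occ o o' /\ ~ implicit_occ o o'.

Definition crossing_pair (s : subst) (e : eqn) (f a : L) : Prop :=
  crossing_in (aeval s [] (fst e)) f a \/ crossing_in (aeval s [] (snd e)) f a.

Variables (G1 G0 : L -> Prop).

Fixpoint substV (ch : nat -> option L) (t : term) : term :=
  match t with
  | Var x => match ch x with Some c => App c [] | None => Var x end
  | CVar X t' => CVar X (substV ch t')
  | App f ts => App f (map (substV ch) ts)
  end.

Fixpoint popX (X : nat) (f : L) (i : nat) (ys : list nat) (t : term) : term :=
  match t with
  | Var x => Var x
  | CVar Y t' =>
      let t'' := popX X f i ys t' in
      if Nat.eqb Y X then
        CVar X (App f (firstn (i - 1) (map Var ys) ++ t'' :: skipn (i - 1) (map Var ys)))
      else CVar Y t''
  | App g ts => App g (map (popX X f i ys) ts)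
  end.

Fixpoint remX (X : nat) (t : term) : term :=
  match t with
  | Var x => Var x
  | CVar Y t' => if Nat.eqb Y X then remX X t' else CVar Y (remX X t')
  | App g ts => App g (map (remX X) ts)
  end.

Definition has_Xa (X : nat) (e : eqn) : Prop :=
  exists a, G0 a /\ subterm_eq (CVar X (App a [])) e.

Definition pop_step (X : nat) (e : eqn) (nv : list nat) (e' : eqn) : Prop :=
  exists (f : L) (b : bool) (e1 : eqn),
    ( (G1 f /\ has_Xa X e /\
       exists i, 1 <= i <= ar f /\ length nv = ar f - 1 /\ NoDup nv /\
                 (forall y, In y nv -> ~ occurs_var y e) /\
                 e1 = map_eq (popX X f i nv) e)
      \/ (~ (G1 f /\ has_Xa X e) /\ nv = [] /\ e1 = e) ) /\
    e' = (if b then map_eq (remX X) e1 else e1).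

Inductive pop_all : list nat -> eqn -> list nat -> eqn -> Prop :=
| pa_nil e : pop_all [] e [] e
| pa_cons X Xs e e1 e2 nv nv' :
    pop_step X e nv e1 -> pop_all Xs e1 nv' e2 -> pop_all (X :: Xs) e (nv ++ nv') e2.

Definition restrict (nv : list nat) (ch : nat -> option L) (x : nat) : option L :=
  if existsb (Nat.eqb x) nv then ch x else None.

Definition proc (e e' : eqn) : Prop :=
  exists (ch1 : nat -> option L) (ord : list nat) (e1 e2 : eqn)
         (nv : list nat) (ch3 : nat -> option L),
    (forall x c, ch1 x = Some c -> G0 c) /\
    e1 = map_eq (substV ch1) e /\
    NoDup ord /\ (forall X, In X ord <-> occurs_cvar X e) /\
    pop_all ord e1 nv e2 /\
    (forall x c, ch3 x = Some c -> G0 c) /\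
    e' = map_eq (substV (restrict nv ch3)) e2.

End Defs.

(* Each rewriting step is mirrored by an operation on substitutions: fixing a variable to a
   constant, appending f(x_1, .., Omega, .., x_m) to sigma(X), and mapping X to Omega.  Hence
   solutions of the resulting equation pull back to solutions of u = v.
   Conversely, the choices are read off a non-empty solution sigma: a variable becomes a
   constant iff sigma maps it to one, and X is popped iff the last letter f of sigma(X) is in
   Gamma_{>=1} and some X(a) occurs; then sigma(X) loses f, the fresh variables receive the
   siblings of the hole, and X is removed iff nothing of sigma(X) remains.  Afterwards no
   sigma'(x) is a constant, every sigma'(X) is nonempty (so its root is not a constant), and
   below each occurrence X(t) the last letter of sigma'(X) and the root of sigma'(t) do not
   form a pair of Gamma_{>=1} x Gamma_0: either t became f(..) with f not a constant, or no
   X(a) occurred.  These facts exclude every crossing father-leaf pair. *)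

From Stdlib Require Import List Arith Lia.
From Stdlib Require Import FunctionalExtensionality Classical ClassicalEpsilon.
Import ListNotations.
Set Implicit Arguments.
Local Arguments Var {L} _.

Lemma In_firstn {A} n (l : list A) x : In x (firstn n l) -> In x l.
Proof. intros H. rewrite <- (firstn_skipn n l). apply in_app_iff; auto. Qed.

Lemma In_skipn {A} n (l : list A) x : In x (skipn n l) -> In x l.
Proof. intros H. rewrite <- (firstn_skipn n l). apply in_app_iff; auto. Qed.

Lemma list_sum_In_le (l : list nat) x : In x l -> x <= list_sum l.
Proof.
  induction l as [|y l IH]; simpl; intros H; [contradiction|].
  destruct H as [<-|H]; [lia|]. specialize (IH H); lia.
Qed.

Lemma list_sum_zero (l : list nat) : (forall x, In x l -> x = 0) -> list_sum l = 0.
Proof. induction l as [|y l IH]; simpl; intros H; auto. rewrite (H y), IH; auto. Qed.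

Lemma map_nth_seq {A} (d : A) (T : list A) b :
  map (fun y => nth (y - b) T d) (seq b (length T)) = T.
Proof.
  revert b. induction T as [|a T IH]; intros b; simpl; auto.
  rewrite Nat.sub_diag. f_equal. rewrite <- (IH (S b)) at 2. apply map_ext_in.
  intros y Hy. apply in_seq in Hy. replace (y - b) with (S (y - S b)) by lia. reflexivity.
Qed.

Section Trees.
Variable L : Type.
Variable ar : L -> nat.

Definition term_nested_ind (P : term L -> Prop)
  (HV : forall x, P (Var x))
  (HC : forall X t, P t -> P (CVar X t))
  (HA : forall f ts, Forall P ts -> P (App f ts)) : forall t, P t :=
  fix F (t : term L) : P t :=
    match t with
    | Var x => HV x
    | CVar X t' => HC X t' (F t')
    | App f ts => HA f ts ((fix G (l : list (term L)) : Forall P l :=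
        match l with [] => Forall_nil _ | a :: l' => Forall_cons _ (F a) (G l') end) ts)
    end.

Definition gtree_nested_ind (P : gtree L -> Prop)
  (H : forall o ts, Forall P ts -> P (gnode o ts)) : forall t, P t :=
  fix F (t : gtree L) : P t :=
    match t with
    | gnode o ts => H o ts ((fix G (l : list (gtree L)) : Forall P l :=
        match l with [] => Forall_nil _ | a :: l' => Forall_cons _ (F a) (G l') end) ts)
    end.

Definition atree_nested_ind (P : atree L -> Prop)
  (H : forall l o ts, Forall P ts -> P (anode l o ts)) : forall t, P t :=
  fix F (t : atree L) : P t :=
    match t with
    | anode l o ts => H l o ts ((fix G (k : list (atree L)) : Forall P k :=
        match k with [] => Forall_nil _ | a :: l' => Forall_cons _ (F a) (G l') end) ts)
    end.

Definition root (g : gtree L) : option L := match g with gnode l _ => l end.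

Inductive gsub : gtree L -> gtree L -> Prop :=
| gs_refl t : gsub t t
| gs_child s l ts t : In t ts -> gsub s t -> gsub s (gnode l ts).

(* [f] is the last letter of the context [g]. *)
Definition hole_parent (g : gtree L) (f : L) : Prop :=
  exists cs ds, gsub (gnode (Some f) cs) g /\ In (gnode None ds) cs.

Lemma plug_closed (g r : gtree L) : holes g = 0 -> plug g r = g.
Proof.
  induction g as [o ts IH] using gtree_nested_ind. intros H.
  destruct o as [f|]; simpl in *; [|lia].
  f_equal. rewrite <- (map_id ts) at 2. apply map_ext_in. intros c Hc.
  rewrite Forall_forall in IH. apply IH; auto.
  pose proof (list_sum_In_le _ _ (in_map (@holes L) _ _ Hc)). lia.
Qed.

Lemma plug_assoc (c d r : gtree L) : plug (plug c d) r = plug c (plug d r).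
Proof.
  induction c as [o ts IH] using gtree_nested_ind. destruct o as [f|]; simpl; auto.
  f_equal. rewrite map_map. apply map_ext_in. intros x Hx. rewrite Forall_forall in IH; auto.
Qed.

Lemma plug_wf (c d : gtree L) : wf_g ar c -> wf_g ar d ->
  wf_g ar (plug c d) /\ holes (plug c d) = holes c * holes d.
Proof.
  intros Hc Hd. induction Hc as [|f ts Hl Hts IH]; simpl; [auto|split].
  - constructor; [rewrite length_map; auto|]. intros t Ht. apply in_map_iff in Ht.
    destruct Ht as [x [<- Hx]]. apply IH; auto.
  - rewrite map_map. clear Hl Hts. induction ts as [|a ts IHts]; simpl; auto.
    rewrite (proj2 (IH a (or_introl eq_refl))), IHts; [lia|].
    intros t Ht. apply IH; simpl; auto.
Qed.

Lemma Omega_gctx : is_gctx ar (Omega L).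
Proof. split; [constructor|reflexivity]. Qed.

Lemma Omega_dec (t : gtree L) : {t = Omega L} + {t <> Omega L}.
Proof. destruct t as [[h|] [|a l]]; try (right; discriminate). left; reflexivity. Qed.

Lemma gctx_root (g : gtree L) : is_gctx ar g -> g <> Omega L ->
  exists h cs, g = gnode (Some h) cs /\ 1 <= ar h.
Proof.
  intros [Hw Hh] Hn. inversion Hw as [|f ts Hl _]; subst; [contradiction|].
  exists f, ts. split; auto. destruct (ar f) eqn:E; [|lia].
  destruct ts; [discriminate|simpl in Hl; lia].
Qed.

(* The hole is the [i]-th argument, counting from 1. *)
Definition hole_ctx (f : L) (i : nat) (T : list (gtree L)) : gtree L :=
  gnode (Some f) (firstn (i - 1) T ++ Omega L :: skipn (i - 1) T).

Lemma hole_ctx_gctx f i T : 1 <= i <= ar f -> length T = ar f - 1 ->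
  (forall t, In t T -> is_gterm ar t) -> is_gctx ar (hole_ctx f i T).
Proof.
  intros Hi Hl HT. split.
  - constructor.
    + rewrite length_app, length_firstn. simpl. rewrite length_skipn. lia.
    + intros t Ht. apply in_app_iff in Ht. destruct Ht as [Ht|[<-|Ht]].
      * apply HT. eapply In_firstn; eauto.
      * constructor.
      * apply HT. eapply In_skipn; eauto.
  - simpl. rewrite map_app, list_sum_app. simpl.
    rewrite !list_sum_zero; auto; intros x Hx; apply in_map_iff in Hx;
      destruct Hx as [y [<- Hy]]; apply HT; eauto using In_firstn, In_skipn.
Qed.

Lemma hole_ctx_app f L1 L2 :
  hole_ctx f (S (length L1)) (L1 ++ L2) = gnode (Some f) (L1 ++ Omega L :: L2).
Proof.
  unfold hole_ctx. simpl. rewrite Nat.sub_0_r, firstn_app, skipn_app, Nat.sub_diag,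
    firstn_all, skipn_all. simpl. rewrite app_nil_r. reflexivity.
Qed.

Lemma holes_split (ts : list (gtree L)) : list_sum (map (@holes L) ts) = 1 ->
  exists A t B, ts = A ++ t :: B /\ holes t = 1 /\ forall x, In x (A ++ B) -> holes x = 0.
Proof.
  induction ts as [|a ts IH]; simpl; intros H; [discriminate|].
  destruct (holes a) eqn:E.
  - destruct (IH H) as [A [t [B [-> [H1 H2]]]]]. exists (a :: A), t, B.
    repeat split; auto. intros x [<-|Hx]; auto.
  - exists [], a, ts. split; [reflexivity|split; [lia|]]. simpl.
    intros x Hx. pose proof (list_sum_In_le _ _ (in_map (@holes L) _ _ Hx)). lia.
Qed.

Lemma gctx_last_letter (g : gtree L) : is_gctx ar g -> g <> Omega L ->
  exists c f L1 L2, g = plug c (gnode (Some f) (L1 ++ Omega L :: L2)) /\ is_gctx ar c /\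
    (forall t, In t (L1 ++ L2) -> is_gterm ar t) /\ length L1 + S (length L2) = ar f.
Proof.
  induction g as [o ts IH] using gtree_nested_ind. intros [Hw Hh] Hn.
  inversion Hw as [|h ts' Hl Hts]; subst; [contradiction|]. simpl in Hh.
  destruct (holes_split ts Hh) as [A [t [B [-> [H1 H2]]]]].
  assert (Hwt : wf_g ar t) by (apply Hts, in_app_iff; simpl; auto).
  assert (HAB : forall x, In x (A ++ B) -> is_gterm ar x).
  { intros x Hx. split; auto. apply Hts. apply in_app_iff in Hx. apply in_app_iff. simpl. tauto. }
  assert (HplugAB : forall d x, In x (A ++ B) -> plug x d = x).
  { intros d x Hx. apply plug_closed, HAB, Hx. }
  destruct (Omega_dec t) as [->|Et].
  - exists (Omega L), h, A, B.
    split; [reflexivity|split; [apply Omega_gctx|split; [exact HAB|]]].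
    rewrite length_app in Hl. simpl in Hl. lia.
  - rewrite Forall_forall in IH.
    destruct (IH t (in_or_app _ _ _ (or_intror (in_eq _ _))) (conj Hwt H1) Et)
      as [c [f [L1 [L2 [-> [[Hcw Hch] [HL Hlen]]]]]]].
    exists (gnode (Some h) (A ++ c :: B)), f, L1, L2.
    split; [|split; [split|split; [exact HL|exact Hlen]]].
    + simpl. f_equal. rewrite map_app. simpl.
      rewrite (map_ext_in _ id A), (map_ext_in _ id B), !map_id; [reflexivity| |];
        intros x Hx; apply HplugAB, in_app_iff; auto.
    + constructor.
      * rewrite length_app in *; simpl in *; auto.
      * intros x Hx. apply in_app_iff in Hx. destruct Hx as [Hx|[<-|Hx]];
          auto; apply HAB, in_app_iff; auto.
    + simpl. rewrite map_app, list_sum_app. simpl. rewrite Hch.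
      rewrite !list_sum_zero; auto; intros x Hx; apply in_map_iff in Hx;
        destruct Hx as [y [<- Hy]]; apply H2, in_app_iff; auto.
Qed.

Lemma gsub_holes (N t : gtree L) : gsub N t -> holes N <= holes t.
Proof.
  induction 1; auto. simpl. pose proof (list_sum_In_le _ _ (in_map (@holes L) _ _ H)). lia.
Qed.

Lemma gsub_plug (c d N : gtree L) : gsub N (plug c d) -> gsub N d \/
  exists h cs, gsub (gnode (Some h) cs) c /\ N = gnode (Some h) (map (fun c' => plug c' d) cs).
Proof.
  revert N. induction c as [o ts IH] using gtree_nested_ind. intros N H.
  destruct o as [h|]; simpl in H; auto.
  inversion H as [|? ? ? ? H2 H3]; subst.
  - right. exists h, ts. split; auto. constructor.
  - apply in_map_iff in H2. destruct H2 as [c [<- Hc]]. rewrite Forall_forall in IH.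
    destruct (IH c Hc N H3) as [H4|[h' [cs [H4 H5]]]]; auto.
    right. exists h', cs. split; auto. econstructor; eauto.
Qed.

Lemma hole_parent_last_letter (c : gtree L) f L1 L2 f' :
  (forall t, In t (L1 ++ L2) -> holes t = 0) ->
  hole_parent (plug c (gnode (Some f) (L1 ++ Omega L :: L2))) f' -> f' = f.
Proof.
  intros HL [cs [ds [Hs Hin]]]. apply gsub_plug in Hs. destruct Hs as [Hs|[h [cs2 [Hs E]]]].
  - inversion Hs as [|? ? ? ? H2 H3]; subst; auto.
    assert (Hh : 1 <= holes (gnode (Some f') cs)).
    { simpl. pose proof (list_sum_In_le _ _ (in_map (@holes L) _ _ Hin)) as Hle.
      simpl in Hle. lia. }
    apply in_app_iff in H2. destruct H2 as [H2|[<-|H2]].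
    + apply gsub_holes in H3. rewrite (HL t) in H3; [lia|apply in_app_iff; auto].
    + inversion H3 as [|? ? ? ? Hnil]; subst. destruct Hnil.
    + apply gsub_holes in H3. rewrite (HL t) in H3; [lia|apply in_app_iff; auto].
  - inversion E; subst. apply in_map_iff in Hin.
    destruct Hin as [[[k|] e] [Hc _]]; simpl in Hc; discriminate.
Qed.

End Trees.

Section Substitutions.
Variable L : Type.
Variable ar : L -> nat.

Lemma subterm_trans (a b c : term L) : subterm a b -> subterm b c -> subterm a c.
Proof. intros H1 H2. revert H1. induction H2; intros; auto; econstructor; eauto. Qed.

Lemma subterm_eq_trans (w t : term L) e : subterm w t -> subterm_eq t e -> subterm_eq w e.
Proof. intros H [H1|H1]; [left|right]; eapply subterm_trans; eauto. Qed.

Lemma subterm_Var (w : term L) x : subterm w (Var x) -> w = Var x.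
Proof. intros H; inversion H; auto. Qed.

Lemma subterm_inv (w t : term L) : subterm w t -> w = t \/
  (exists X t', t = CVar X t' /\ subterm w t') \/
  (exists g ts t', t = App g ts /\ In t' ts /\ subterm w t').
Proof. intros H; destruct H; eauto 10. Qed.

Lemma wf_subterm (w t : term L) : wf_t ar t -> subterm w t -> wf_t ar w.
Proof. intros Hw H. induction H; auto; inversion Hw; subst; auto. Qed.

Lemma apply_ext (s1 s2 : subst L) (t : term L) : (forall Y, sX s1 Y = sX s2 Y) ->
  (forall x, subterm (Var x) t -> sx s1 x = sx s2 x) -> apply s1 t = apply s2 t.
Proof.
  intros HX. induction t as [x|X t IH|g ts IH] using term_nested_ind; intros Hx; simpl.
  - apply Hx. constructor.
  - rewrite HX, IH; auto. intros x H; apply Hx; constructor; auto.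
  - f_equal. apply map_ext_in. intros t Ht. rewrite Forall_forall in IH. apply IH; auto.
    intros x H; apply Hx; econstructor; eauto.
Qed.

(** * Substitutions mirroring the rewriting steps *)

Definition subst_consts (s : subst L) (ch : nat -> option L) : subst L :=
  Subst (sX s) (fun x => match ch x with Some c => gnode (Some c) [] | None => sx s x end).

Definition subst_pop (s : subst L) X (f : L) i (ys : list nat) : subst L :=
  Subst (fun Y => if Nat.eqb Y X then plug (sX s X) (hole_ctx f i (map (sx s) ys)) else sX s Y)
        (sx s).

Definition subst_rem (s : subst L) X : subst L :=
  Subst (fun Y => if Nat.eqb Y X then Omega L else sX s Y) (sx s).

Lemma apply_substV s ch t : apply s (substV ch t) = apply (subst_consts s ch) t.
Proof.
  induction t as [x|X t IH|g ts IH] using term_nested_ind; simpl.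
  - destruct (ch x); auto.
  - rewrite IH; auto.
  - f_equal. rewrite map_map. apply map_ext_in. intros. rewrite Forall_forall in IH; auto.
Qed.

Lemma apply_popX s X f i ys t : (forall y, holes (sx s y) = 0) ->
  apply s (popX X f i ys t) = apply (subst_pop s X f i ys) t.
Proof.
  intros Hg. induction t as [x|Y t IH|g ts IH] using term_nested_ind; simpl; auto.
  - destruct (Nat.eqb_spec Y X) as [->|]; simpl; [|rewrite IH; auto].
    rewrite plug_assoc. unfold hole_ctx. simpl. rewrite !map_app, !firstn_map, !skipn_map.
    simpl. rewrite IH, !map_map. do 3 f_equal; [|f_equal]; apply map_ext_in; intros;
    symmetry; apply plug_closed, Hg.
  - f_equal. rewrite map_map. apply map_ext_in. intros. rewrite Forall_forall in IH; auto.
Qed.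

Lemma apply_remX s X t : apply s (remX X t) = apply (subst_rem s X) t.
Proof.
  induction t as [x|Y t IH|g ts IH] using term_nested_ind; simpl; auto.
  - destruct (Nat.eqb_spec Y X); simpl; rewrite IH; auto.
  - f_equal. rewrite map_map. apply map_ext_in. intros. rewrite Forall_forall in IH; auto.
Qed.

Lemma subst_consts_valid s ch : valid_subst ar s -> (forall x c, ch x = Some c -> ar c = 0) ->
  valid_subst ar (subst_consts s ch).
Proof.
  intros [HX Hx] Hch. split; simpl; auto. intros x. destruct (ch x) eqn:E; auto.
  split; auto. constructor; [rewrite (Hch _ _ E); reflexivity|intros t []].
Qed.

Lemma subst_pop_valid s X f i ys : valid_subst ar s -> 1 <= i <= ar f -> length ys = ar f - 1 ->
  valid_subst ar (subst_pop s X f i ys).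
Proof.
  intros [HX Hx] Hi Hl. split; simpl; auto. intros Y. destruct (Nat.eqb Y X); auto.
  destruct (HX X) as [w1 h1].
  destruct (@hole_ctx_gctx _ ar f i (map (sx s) ys)) as [w2 h2]; auto.
  - rewrite length_map; auto.
  - intros t Ht. apply in_map_iff in Ht. destruct Ht as [y [<- _]]. auto.
  - destruct (plug_wf w1 w2) as [Hw Hh]. split; auto. rewrite Hh, h1, h2. auto.
Qed.

Lemma subst_rem_valid s X : valid_subst ar s -> valid_subst ar (subst_rem s X).
Proof.
  intros [HX Hx]. split; simpl; auto. intros Y. destruct (Nat.eqb Y X); auto. apply Omega_gctx.
Qed.

Lemma subst_consts_id (s : subst L) ch :
  (forall x c, ch x = Some c -> sx s x = gnode (Some c) []) -> subst_consts s ch = s.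
Proof.
  intros H. destruct s as [a b]. unfold subst_consts; simpl. f_equal. extensionality x.
  destruct (ch x) eqn:E; auto. symmetry. apply (H x _ E).
Qed.

Lemma apply_substV_id (s : subst L) ch t :
  (forall x c, ch x = Some c -> sx s x = gnode (Some c) []) ->
  apply s (substV ch t) = apply s t.
Proof. intros H. rewrite apply_substV, subst_consts_id; auto. Qed.

Lemma subst_rem_id (s : subst L) X : sX s X = Omega L -> subst_rem s X = s.
Proof.
  intros H. destruct s as [a b]. unfold subst_rem; simpl. f_equal. extensionality Y.
  destruct (Nat.eqb_spec Y X); subst; auto.
Qed.

End Substitutions.

Section Rewriting.
Variable L : Type.
Variable ar : L -> nat.

Lemma sub_substV ch (w t : term L) :
  subterm w (substV ch t) -> exists t', subterm t' t /\ w = substV ch t'.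
Proof.
  revert w. induction t as [x|X t IH|g ts IH] using term_nested_ind; intros w H; simpl in H;
    apply subterm_inv in H; destruct H as [H|[[Y [t1 [E H]]]|[g1 [ts1 [t1 [E [Hin H]]]]]]].
  - subst. exists (Var x); split; [constructor|reflexivity].
  - destruct (ch x); discriminate.
  - destruct (ch x); [|discriminate]. inversion E; subst. destruct Hin.
  - subst. exists (CVar X t); split; [constructor|reflexivity].
  - inversion E; subst. destruct (IH _ H) as [t' [H1 H2]].
    exists t'; split; auto. constructor; auto.
  - discriminate.
  - subst. exists (App g ts); split; [constructor|reflexivity].
  - discriminate.
  - inversion E; subst. apply in_map_iff in Hin. destruct Hin as [t2 [<- Ht2]].
    rewrite Forall_forall in IH. destruct (IH _ Ht2 _ H) as [t' [H3 H4]].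
    exists t'; split; auto. econstructor; eauto.
Qed.

Lemma substV_Var ch (t : term L) x : substV ch t = Var x -> t = Var x /\ ch x = None.
Proof.
  destruct t as [y| |]; simpl; try discriminate.
  destruct (ch y) eqn:E; intros H; inversion H; subst; auto.
Qed.

Lemma substV_CVar ch (t : term L) Y t0 :
  substV ch t = CVar Y t0 -> exists t0', t = CVar Y t0' /\ t0 = substV ch t0'.
Proof.
  destruct t as [y| |]; simpl; try discriminate; [destruct (ch y); discriminate|].
  intros H; inversion H; subst; eauto.
Qed.

Definition pop_arg X (f : L) i ys (t0 : term L) : term L :=
  App f (firstn (i - 1) (map Var ys) ++ popX X f i ys t0 :: skipn (i - 1) (map Var ys)).

Lemma popX_CVar_self X (f : L) i ys t0 : popX X f i ys (CVar X t0) = CVar X (pop_arg X f i ys t0).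
Proof. simpl. rewrite Nat.eqb_refl. reflexivity. Qed.

Lemma sub_popX X (f : L) i ys (w t : term L) : subterm w (popX X f i ys t) ->
  (exists t', subterm t' t /\ w = popX X f i ys t') \/
  (exists t', subterm (CVar X t') t /\ w = pop_arg X f i ys t') \/
  (exists y, In y ys /\ w = Var y).
Proof.
  revert w. induction t as [x|Y t IH|g ts IH] using term_nested_ind; intros w H; simpl in H.
  - apply subterm_Var in H; subst. left. exists (Var x); split; [constructor|reflexivity].
  - assert (Hlift : forall w, (exists t', subterm t' t /\ w = popX X f i ys t') \/
        (exists t', subterm (CVar X t') t /\ w = pop_arg X f i ys t') \/
        (exists y, In y ys /\ w = Var y) ->
        (exists t', subterm t' (CVar Y t) /\ w = popX X f i ys t') \/
        (exists t', subterm (CVar X t') (CVar Y t) /\ w = pop_arg X f i ys t') \/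
        (exists y, In y ys /\ w = Var y)).
    { intros w' [[t' [A B]]|[[t' [A B]]|A]]; [left|right; left|auto];
        exists t'; split; auto; constructor; auto. }
    destruct (Nat.eqb_spec Y X) as [->|HYX].
    + apply subterm_inv in H.
      destruct H as [H|[[Y1 [t1 [E H]]]|[g1 [ts1 [t1 [E [Hin H]]]]]]]; try discriminate.
      * left. exists (CVar X t). split; [constructor|]. rewrite popX_CVar_self. auto.
      * inversion E; subst. clear E. apply subterm_inv in H.
        destruct H as [H|[[Y2 [t2 [E H]]]|[g2 [ts2 [t2 [E [H1 H2]]]]]]]; try discriminate.
        -- right; left. exists t; split; [constructor|auto].
        -- inversion E; subst. clear E. apply in_app_iff in H1. destruct H1 as [H1|[<-|H1]].
           ++ apply In_firstn, in_map_iff in H1. destruct H1 as [y [<- Hy]].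
              apply subterm_Var in H2; subst. right; right; eauto.
           ++ apply Hlift, IH, H2.
           ++ apply In_skipn, in_map_iff in H1. destruct H1 as [y [<- Hy]].
              apply subterm_Var in H2; subst. right; right; eauto.
    + apply subterm_inv in H.
      destruct H as [H|[[Z [t1 [E H]]]|[g1 [ts1 [t1 [E [Hin H]]]]]]]; try discriminate.
      * left. exists (CVar Y t). split; [constructor|]. simpl.
        destruct (Nat.eqb_spec Y X); [contradiction|auto].
      * inversion E; subst. apply Hlift, IH, H.
  - apply subterm_inv in H.
    destruct H as [H|[[Z [t1 [E H]]]|[g1 [ts1 [t1 [E [H1 H2]]]]]]]; try discriminate.
    + left. exists (App g ts); split; [constructor|auto].
    + inversion E; subst. apply in_map_iff in H1. destruct H1 as [t2 [<- Ht2]].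
      rewrite Forall_forall in IH.
      destruct (IH _ Ht2 _ H2) as [[t' [A B]]|[[t' [A B]]|A]];
        [left|right; left|auto]; exists t'; split; auto; econstructor; eauto.
Qed.

Lemma popX_Var X (f : L) i ys t x : popX X f i ys t = Var x -> t = Var x.
Proof.
  destruct t as [| Y |]; simpl; try discriminate; auto. destruct (Nat.eqb Y X); discriminate.
Qed.

Lemma popX_CVar X (f : L) i ys t Y t0 : popX X f i ys t = CVar Y t0 ->
  exists t0', t = CVar Y t0' /\
    ((Y = X /\ t0 = pop_arg X f i ys t0') \/ (Y <> X /\ t0 = popX X f i ys t0')).
Proof.
  destruct t as [|Z|]; simpl; try discriminate.
  destruct (Nat.eqb_spec Z X); intros H; inversion H; subst; eauto.
Qed.

Lemma sub_remX X (w t : term L) :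
  subterm w (remX X t) -> exists t', subterm t' t /\ w = remX X t'.
Proof.
  revert w. induction t as [x|Y t IH|g ts IH] using term_nested_ind; intros w H; simpl in H.
  - apply subterm_Var in H; subst. exists (Var x); split; [constructor|reflexivity].
  - destruct (Nat.eqb_spec Y X).
    + destruct (IH _ H) as [t' [A B]]. exists t'; split; auto. constructor; auto.
    + apply subterm_inv in H.
      destruct H as [H|[[Z [t1 [E H]]]|[g1 [ts1 [t1 [E [Hin H]]]]]]]; try discriminate.
      * exists (CVar Y t). split; [constructor|]. simpl.
        destruct (Nat.eqb_spec Y X); [contradiction|auto].
      * inversion E; subst. destruct (IH _ H) as [t' [A B]].
        exists t'; split; auto. constructor; auto.
  - apply subterm_inv in H.
    destruct H as [H|[[Z [t1 [E H]]]|[g1 [ts1 [t1 [E [H1 H2]]]]]]]; try discriminate.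
    + exists (App g ts); split; [constructor|auto].
    + inversion E; subst. apply in_map_iff in H1. destruct H1 as [t2 [<- Ht2]].
      rewrite Forall_forall in IH. destruct (IH _ Ht2 _ H2) as [t' [A B]].
      exists t'; split; auto. econstructor; eauto.
Qed.

Lemma remX_Var_subterm X (t : term L) x : remX X t = Var x -> subterm (Var x) t.
Proof.
  induction t as [z|Y t IH|g ts IH] using term_nested_ind; simpl; intros H; try discriminate.
  - rewrite H; constructor.
  - destruct (Nat.eqb Y X); try discriminate. constructor; auto.
Qed.

Lemma remX_Var X (t : term L) x : remX X t = Var x ->
  (forall w, subterm (CVar X w) t -> exists g ts, w = App g ts) -> t = Var x.
Proof.
  destruct t as [z|Y t|g ts]; simpl; intros H Hw; try discriminate; auto.
  destruct (Nat.eqb_spec Y X); try discriminate. subst.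
  destruct (Hw t (st_refl _)) as [g [ts ->]]. discriminate.
Qed.

Lemma remX_CVar X (t : term L) Y t0 : remX X t = CVar Y t0 ->
  Y <> X /\ exists t0', subterm (CVar Y t0') t /\ t0 = remX X t0'.
Proof.
  induction t as [z|Z t IH|g ts IH] using term_nested_ind; simpl; intros H; try discriminate.
  destruct (Nat.eqb_spec Z X).
  - destruct (IH H) as [A [t0' [B C]]]. split; auto. exists t0'; split; auto. constructor; auto.
  - inversion H; subst. split; auto. exists t; split; auto. constructor.
Qed.

Lemma wf_substV ch (t : term L) :
  (forall x c, ch x = Some c -> ar c = 0) -> wf_t ar t -> wf_t ar (substV ch t).
Proof.
  intros Hc H. induction H; simpl.
  - destruct (ch x) eqn:E; constructor; [rewrite (Hc _ _ E); auto|intros t []].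
  - constructor; auto.
  - constructor; [rewrite length_map; auto|]. intros t Ht. apply in_map_iff in Ht.
    destruct Ht as [t' [<- Ht']]. auto.
Qed.

Lemma wf_popX X (f : L) i ys (t : term L) : 1 <= i <= ar f -> length ys = ar f - 1 ->
  wf_t ar t -> wf_t ar (popX X f i ys t).
Proof.
  intros Hi Hl H. induction H; simpl.
  - constructor.
  - destruct (Nat.eqb X0 X); constructor; auto. constructor.
    + rewrite length_app, length_firstn, length_map. simpl. rewrite length_skipn, length_map. lia.
    + intros t' Ht'. apply in_app_iff in Ht'. destruct Ht' as [Ht'|[<-|Ht']]; auto.
      * apply In_firstn, in_map_iff in Ht'. destruct Ht' as [y [<- _]]. constructor.
      * apply In_skipn, in_map_iff in Ht'. destruct Ht' as [y [<- _]]. constructor.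
  - constructor; [rewrite length_map; auto|]. intros t Ht. apply in_map_iff in Ht.
    destruct Ht as [t' [<- Ht']]. auto.
Qed.

Lemma wf_remX X (t : term L) : wf_t ar t -> wf_t ar (remX X t).
Proof.
  intros H. induction H; simpl.
  - constructor.
  - destruct (Nat.eqb X0 X); auto. constructor; auto.
  - constructor; [rewrite length_map; auto|]. intros t Ht. apply in_map_iff in Ht.
    destruct Ht as [t' [<- Ht']]. auto.
Qed.

Definition pop_rem (rem : bool) X (f : L) i ys (t : term L) : term L :=
  if rem then remX X (popX X f i ys t) else popX X f i ys t.

Lemma wf_pop_rem rem X (f : L) i ys (t : term L) : 1 <= i <= ar f -> length ys = ar f - 1 ->
  wf_t ar t -> wf_t ar (pop_rem rem X f i ys t).
Proof. intros Hi Hl Ht. destruct rem; [apply wf_remX|]; apply wf_popX; auto. Qed.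

Lemma popX_args_App X (f : L) i ys (t w : term L) : subterm (CVar X w) (popX X f i ys t) ->
  exists g ts, w = App g ts.
Proof.
  intros H. apply sub_popX in H.
  destruct H as [[t' [_ E]]|[[t' [_ E]]|[y [_ E]]]]; try discriminate.
  symmetry in E. apply popX_CVar in E.
  destruct E as [t0' [_ [[_ ->]|[Hn _]]]]; [|contradiction]. unfold pop_arg. eauto.
Qed.

Lemma pop_rem_Var rem X (f : L) i ys (t : term L) x : pop_rem rem X f i ys t = Var x -> t = Var x.
Proof.
  unfold pop_rem. destruct rem; intros H; apply popX_Var with X f i ys; auto.
  apply remX_Var in H; auto. intros w Hw. eapply popX_args_App; eauto.
Qed.

Lemma sub_pop_rem_Var rem X (f : L) i ys (t : term L) z :
  subterm (Var z) (pop_rem rem X f i ys t) -> subterm (Var z) t \/ In z ys.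
Proof.
  intros H. assert (H1 : subterm (Var z) (popX X f i ys t)).
  { unfold pop_rem in H. destruct rem; auto. apply sub_remX in H. destruct H as [t1 [H1 E]].
    symmetry in E. apply remX_Var_subterm in E. eapply subterm_trans; eauto. }
  apply sub_popX in H1.
  destruct H1 as [[t' [A E]]|[[t' [_ E]]|[y [Hy E]]]]; try discriminate.
  - symmetry in E. apply popX_Var in E. subst. auto.
  - inversion E; subst. auto.
Qed.

Lemma sub_pop_rem_CVar rem X (f : L) i ys (t : term L) Y t0 :
  subterm (CVar Y t0) (pop_rem rem X f i ys t) ->
  (Y = X /\ rem = false /\ exists t1, t0 = pop_arg X f i ys t1) \/
  (Y <> X /\ exists t2, subterm (CVar Y t2) t /\ t0 = pop_rem rem X f i ys t2).
Proof.
  unfold pop_rem. destruct rem; intros H.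
  - apply sub_remX in H. destruct H as [t1 [H1 E]]. symmetry in E. apply remX_CVar in E.
    destruct E as [Hne [t0' [H2 ->]]]. pose proof (subterm_trans H2 H1) as H3.
    apply sub_popX in H3. destruct H3 as [[t' [A E]]|[[t' [_ E]]|[y [Hy E]]]]; try discriminate.
    symmetry in E. apply popX_CVar in E.
    destruct E as [t3 [-> [[? _]|[_ ->]]]]; [contradiction|].
    right. split; auto. exists t3. split; auto.
  - apply sub_popX in H. destruct H as [[t' [A E]]|[[t' [_ E]]|[y [Hy E]]]]; try discriminate.
    symmetry in E. apply popX_CVar in E. destruct E as [t3 [-> [[-> ->]|[Hne ->]]]].
    + left. eauto.
    + right. split; auto. exists t3. split; auto.
Qed.

Lemma sub_pop_rem_eq_CVar rem X (f : L) i ys e Y t0 :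
  subterm_eq (CVar Y t0) (map_eq (pop_rem rem X f i ys) e) ->
  (Y = X /\ rem = false /\ exists t1, t0 = pop_arg X f i ys t1) \/
  (Y <> X /\ exists t2, subterm_eq (CVar Y t2) e /\ t0 = pop_rem rem X f i ys t2).
Proof.
  intros Hs. assert (Hs' : exists t, (t = fst e \/ t = snd e) /\
                             subterm (CVar Y t0) (pop_rem rem X f i ys t)).
  { destruct Hs as [Hs|Hs]; eauto. }
  destruct Hs' as [t [Ht Hs']]. apply sub_pop_rem_CVar in Hs'.
  destruct Hs' as [H|[Hne [t2 [H1 H2]]]]; auto. right. split; auto. exists t2. split; auto.
  destruct Ht as [Ht|Ht]; subst t; [left|right]; auto.
Qed.

Lemma occurs_var_pop_rem rem X (f : L) i ys e z :
  occurs_var z (map_eq (pop_rem rem X f i ys) e) -> occurs_var z e \/ In z ys.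
Proof.
  intros [H|H]; apply sub_pop_rem_Var in H; destruct H as [H|H]; auto; left;
    [left|right]; auto.
Qed.

Lemma sub_substV_eq_CVar ch (e : eqn L) X t0 : subterm_eq (CVar X t0) (map_eq (substV ch) e) ->
  exists t0', subterm_eq (CVar X t0') e /\ t0 = substV ch t0'.
Proof.
  intros [Hs|Hs]; apply sub_substV in Hs; destruct Hs as [t' [Ht' E]]; symmetry in E;
    apply substV_CVar in E; destruct E as [t0' [-> ->]]; exists t0'; split; auto;
    [left|right]; auto.
Qed.

Lemma occurs_var_substV ch (e : eqn L) x :
  occurs_var x (map_eq (substV ch) e) -> occurs_var x e /\ ch x = None.
Proof.
  intros [Hs|Hs]; apply sub_substV in Hs; destruct Hs as [t' [Ht' E]]; symmetry in E;
    apply substV_Var in E; destruct E as [-> E]; split; auto; [left|right]; auto.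
Qed.

Lemma wf_subterm_eq w (e : eqn L) :
  wf_t ar (fst e) -> wf_t ar (snd e) -> subterm_eq w e -> wf_t ar w.
Proof. intros H1 H2 [H|H]; [apply wf_subterm with (fst e)|apply wf_subterm with (snd e)]; auto. Qed.

Fixpoint max_var (t : term L) : nat :=
  match t with
  | Var x => x
  | CVar _ t' => max_var t'
  | App _ ts => list_max (map max_var ts)
  end.

Lemma max_var_ge (t : term L) x : subterm (Var x) t -> x <= max_var t.
Proof.
  induction t as [z|Y t IH|g ts IH] using term_nested_ind; intros H; simpl;
    apply subterm_inv in H;
    destruct H as [H|[[Z [t1 [E H]]]|[g1 [ts1 [t1 [E [Hin H]]]]]]]; try discriminate.
  - inversion H; auto.
  - inversion E; subst; auto.
  - inversion E; subst. rewrite Forall_forall in IH. specialize (IH _ Hin H).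
    pose proof (proj1 (list_max_le (map max_var ts1) _) (le_n _)) as Hmax.
    rewrite Forall_forall in Hmax. specialize (Hmax _ (in_map _ _ _ Hin)). lia.
Qed.

Definition fresh_var (e : eqn L) : nat := S (Nat.max (max_var (fst e)) (max_var (snd e))).

Lemma occurs_var_lt_fresh e x : occurs_var x e -> x < fresh_var e.
Proof. unfold fresh_var. intros [H|H]; apply max_var_ge in H; lia. Qed.

Fixpoint cvars (t : term L) : list nat :=
  match t with
  | Var _ => []
  | CVar X t' => X :: cvars t'
  | App _ ts => flat_map cvars ts
  end.

Lemma In_cvars (t : term L) X : In X (cvars t) <-> exists s, subterm (CVar X s) t.
Proof.
  induction t as [z|Y t IH|g ts IH] using term_nested_ind; simpl; split.
  - intros [].
  - intros [s H]. apply subterm_Var in H. discriminate.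
  - intros [->|H].
    + exists t. constructor.
    + apply IH in H. destruct H as [s H]. exists s. constructor; auto.
  - intros [s H]. apply subterm_inv in H.
    destruct H as [H|[[Z [t1 [E H]]]|[g1 [ts1 [t1 [E [Hin H]]]]]]]; try discriminate.
    + inversion H; auto.
    + inversion E; subst. right. apply IH. eauto.
  - intros H. apply in_flat_map in H. destruct H as [t [Ht H]]. rewrite Forall_forall in IH.
    apply IH in H; auto. destruct H as [s H]. exists s. econstructor; eauto.
  - intros [s H]. apply subterm_inv in H.
    destruct H as [H|[[Z [t1 [E H]]]|[g1 [ts1 [t1 [E [Hin H]]]]]]]; try discriminate.
    inversion E; subst. apply in_flat_map. exists t1. split; auto. rewrite Forall_forall in IH.
    apply IH; eauto.
Qed.

Definition cvars_eq (e : eqn L) : list nat :=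
  nodup Nat.eq_dec (cvars (fst e) ++ cvars (snd e)).

Lemma In_cvars_eq e X : In X (cvars_eq e) <-> occurs_cvar X e.
Proof.
  unfold cvars_eq, occurs_cvar, subterm_eq.
  rewrite nodup_In, in_app_iff, !In_cvars. firstorder.
Qed.

End Rewriting.

Section Popping.
Variable L : Type.
Variable ar : L -> nat.

(* The solution after popping the last letter of [s X] into the equation: [X] becomes the
   rest [c] of [s X], and the fresh variables [b0], [b0 + 1], .. receive the siblings [T]
   of the hole. *)
Definition subst_after_pop (s : subst L) X c b0 (T : list (gtree L)) : subst L :=
  Subst (fun Y => if Nat.eqb Y X then c else sX s Y)
        (fun y => if andb (b0 <=? y) (y <? b0 + length T) then nth (y - b0) T (Omega L)
                  else sx s y).

Section AfterPop.
Variables (s : subst L) (X : nat) (c : gtree L) (b0 : nat) (T : list (gtree L)).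
Let s' := subst_after_pop s X c b0 T.

Lemma subst_after_pop_old_var y : y < b0 -> sx s' y = sx s y.
Proof.
  intros Hy. unfold s', subst_after_pop; cbn [sx].
  destruct (Nat.leb_spec b0 y); [lia|reflexivity].
Qed.

Lemma subst_after_pop_other Y : Y <> X -> sX s' Y = sX s Y.
Proof.
  intros HY. unfold s', subst_after_pop; cbn [sX].
  destruct (Nat.eqb_spec Y X); [contradiction|reflexivity].
Qed.

Lemma subst_after_pop_popped : sX s' X = c.
Proof. unfold s', subst_after_pop; cbn [sX]. rewrite Nat.eqb_refl. reflexivity. Qed.

Lemma subst_after_pop_fresh : map (sx s') (seq b0 (length T)) = T.
Proof.
  rewrite <- (map_nth_seq (Omega L) T b0) at 2. apply map_ext_in. intros y Hy.
  apply in_seq in Hy. unfold s', subst_after_pop; cbn [sX sx].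
  destruct (Nat.leb_spec b0 y), (Nat.ltb_spec y (b0 + length T)); cbn [andb]; reflexivity || lia.
Qed.

Lemma subst_after_pop_valid : valid_subst ar s -> is_gctx ar c ->
  (forall t, In t T -> is_gterm ar t) -> valid_subst ar s'.
Proof.
  intros [HX Hx] Hc HT. split; unfold s', subst_after_pop; cbn [sX sx].
  - intros Y. destruct (Nat.eqb Y X); auto.
  - intros y. destruct (Nat.leb_spec b0 y), (Nat.ltb_spec y (b0 + length T)); cbn [andb]; auto.
    apply HT, nth_In. lia.
Qed.

End AfterPop.

Lemma apply_pop_rem_after_pop s X c f L1 L2 b0 rem t :
  valid_subst ar s -> is_gctx ar c -> (forall t, In t (L1 ++ L2) -> is_gterm ar t) ->
  sX s X = plug c (gnode (Some f) (L1 ++ Omega L :: L2)) -> (rem = true -> c = Omega L) ->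
  (forall x, subterm (Var x) t -> x < b0) ->
  apply (subst_after_pop s X c b0 (L1 ++ L2))
        (pop_rem rem X f (S (length L1)) (seq b0 (length (L1 ++ L2))) t) = apply s t.
Proof.
  intros Hv Hc HT HX Hrem Ht. set (s' := subst_after_pop s X c b0 (L1 ++ L2)).
  assert (Hv' : valid_subst ar s') by (apply subst_after_pop_valid; auto).
  assert (Hpop : apply s' (popX X f (S (length L1)) (seq b0 (length (L1 ++ L2))) t) = apply s t).
  { rewrite apply_popX by (intros y; apply (proj2 Hv' y)). apply apply_ext.
    - intros Y. cbn [sX subst_pop]. unfold s'. rewrite subst_after_pop_fresh, hole_ctx_app.
      destruct (Nat.eqb_spec Y X) as [->|HY].
      + rewrite subst_after_pop_popped. auto.
      + apply subst_after_pop_other; auto.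
    - intros x Hx. cbn [sx subst_pop]. apply subst_after_pop_old_var. auto. }
  unfold pop_rem. destruct rem; auto.
  unfold s'. rewrite apply_remX, subst_rem_id; auto. rewrite subst_after_pop_popped. auto.
Qed.

End Popping.

Section Annotations.
Variable L : Type.

Fixpoint aeval_args (s : subst L) (p : list nat) (i : nat) (l : list (term L)) : list (atree L) :=
  match l with
  | [] => []
  | t' :: l' => aeval s (p ++ [i]) t' :: aeval_args s p (S i) l'
  end.

Lemma aeval_App s p f ts : aeval s p (App f ts) = anode (Some f) Expl (aeval_args s p 0 ts).
Proof. simpl. f_equal. generalize 0. induction ts; simpl; intros; f_equal; auto. Qed.

Lemma In_aeval_args s p i l c :
  In c (aeval_args s p i l) -> exists j t, In t l /\ c = aeval s (p ++ [j]) t.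
Proof.
  revert i; induction l as [|t l IH]; simpl; intros i H; [contradiction|].
  destruct H as [<-|H]; eauto. destruct (IH _ H) as [j [t' [Ht ->]]]; eauto.
Qed.

Lemma asubtree_ann o (g : gtree L) N : asubtree N (ann o g) -> exists g', gsub g' g /\ N = ann o g'.
Proof.
  revert N. induction g as [l ts IH] using gtree_nested_ind. intros N H. simpl in H.
  inversion H as [|? ? ? ? ? H2 H3]; subst.
  - exists (gnode l ts); split; [constructor|reflexivity].
  - apply in_map_iff in H2. destruct H2 as [c [<- Hc]]. rewrite Forall_forall in IH.
    destruct (IH c Hc N H3) as [g' [Hg ->]]. exists g'; split; auto. econstructor; eauto.
Qed.

Lemma asubtree_aplug (C R N : atree L) : asubtree N (aplug C R) -> asubtree N R \/
  exists (f : L) o cs, asubtree (anode (Some f) o cs) C /\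
                       N = anode (Some f) o (map (fun c => aplug c R) cs).
Proof.
  revert N. induction C as [l o ts IH] using atree_nested_ind. intros N H.
  destruct l as [f|]; simpl in H; auto.
  inversion H as [|? ? ? ? ? H2 H3]; subst.
  - right. exists f, o, ts. split; auto. constructor.
  - apply in_map_iff in H2. destruct H2 as [c [<- Hc]]. rewrite Forall_forall in IH.
    destruct (IH c Hc N H3) as [H4|[f' [o' [cs [H4 H5]]]]]; auto.
    right. exists f', o', cs. split; auto. econstructor; eauto.
Qed.

Definition aroot (g : atree L) : option L := match g with anode l _ _ => l end.

Lemma aroot_aeval s p t : aroot (aeval s p t) = root (apply s t).
Proof.
  revert p. induction t as [x|X t IH|f ts]; intros p; simpl.
  - destruct (sx s x); reflexivity.
  - destruct (sX s X) as [[h|] cs]; simpl; auto.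
  - reflexivity.
Qed.

End Annotations.

Section Procedure.
Variable L : Type.
Variable ar : L -> nat.
Variables G1 G0 : L -> Prop.
Hypothesis hG1 : forall f, G1 f -> 1 <= ar f.
Hypothesis hG0 : forall c, G0 c -> ar c = 0.

(** * Soundness *)

Lemma pop_step_sound X e nv e' s : pop_step ar G1 G0 X e nv e' -> solution ar s e' ->
  exists s0, solution ar s0 e.
Proof.
  intros [f [rem [e1 [H ->]]]] Hs.
  assert (Hs1 : exists s1, solution ar s1 e1).
  { destruct rem; [|exists s; auto].
    exists (subst_rem s X). destruct Hs as [Hv Ha]. split; [apply subst_rem_valid; auto|].
    simpl in Ha. rewrite !apply_remX in Ha. auto. }
  destruct Hs1 as [s1 [Hv Ha]].
  destruct H as [[Hf [Hx [i [Hi [Hl [_ [_ ->]]]]]]] | [_ [_ ->]]]; [|exists s1; split; auto].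
  exists (subst_pop s1 X f i nv). split; [apply subst_pop_valid; auto|].
  simpl in Ha. rewrite !apply_popX in Ha; auto; intros y; apply (proj2 Hv y).
Qed.

Lemma pop_all_sound ord e nv e' : pop_all ar G1 G0 ord e nv e' ->
  forall s, solution ar s e' -> exists s0, solution ar s0 e.
Proof.
  induction 1; intros s Hs; eauto.
  destruct (IHpop_all s Hs) as [s1 Hs1]. eapply pop_step_sound; eauto.
Qed.

Lemma solution_substV s ch e : (forall x c, ch x = Some c -> G0 c) ->
  solution ar s (map_eq (substV ch) e) -> solution ar (subst_consts s ch) e.
Proof.
  intros Hch [Hv Ha]. split; [apply subst_consts_valid; eauto|].
  simpl in Ha. rewrite !apply_substV in Ha. auto.
Qed.

Lemma restrict_G0 nv ch : (forall x c, ch x = Some c -> G0 c) ->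
  forall x c, restrict nv ch x = Some c -> G0 c.
Proof. unfold restrict. intros H x c. destruct existsb; eauto. discriminate. Qed.

Lemma proc_sound e e' : proc ar G1 G0 e e' ->
  (exists s', solution ar s' e') -> exists s, solution ar s e.
Proof.
  intros [ch1 [ord [e1 [e2 [nv [ch3 [Hc1 [-> [_ [_ [Hpa [Hc3 ->]]]]]]]]]]]] [s' Hs'].
  apply solution_substV in Hs'; [|apply restrict_G0; auto].
  destruct (pop_all_sound Hpa Hs') as [s1 Hs1].
  apply solution_substV in Hs1; eauto.
Qed.

(** * Absence of crossing pairs *)

Definition const_rooted (g : gtree L) : Prop := exists a, G0 a /\ root g = Some a.

Definition vars_not_const (s : subst L) (t : term L) : Prop :=
  forall x, subterm (Var x) t -> ~ const_rooted (sx s x).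

Definition cvar_safe (s : subst L) X (t0 : term L) : Prop :=
  sX s X <> Omega L /\ forall f, G1 f -> hole_parent (sX s X) f -> ~ const_rooted (apply s t0).

Definition cvars_safe (s : subst L) (t : term L) : Prop :=
  forall X t0, subterm (CVar X t0) t -> cvar_safe s X t0.

Lemma no_crossing_aeval s : valid_subst ar s -> forall t p,
  vars_not_const s t -> cvars_safe s t ->
  forall f a, G1 f -> G0 a -> ~ crossing_in ar (aeval s p t) f a.
Proof.
  intros Hv. induction t as [x|X t0 IH|g ts IH] using term_nested_ind;
    intros p Hvars Hcvars f a Hf Ha [_ [_ [o [cs [o' [ds [Hsub [Hin [Hne Hni]]]]]]]]].
  - simpl in Hsub. apply asubtree_ann in Hsub. destruct Hsub as [[l cs'] [_ Hg']].
    simpl in Hg'. injection Hg'; intros -> -> _.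
    apply in_map_iff in Hin. destruct Hin as [[l2 c2] [Hc _]]. simpl in Hc.
    injection Hc; intros _ <- _. apply Hni. exists p; auto.
  - simpl in Hsub. apply asubtree_aplug in Hsub. destruct Hsub as [Hsub|[f' [o2 [cs2 [Hs2 HN]]]]].
    + apply (IH (p ++ [0])) with f a; auto.
      * intros x Hx. apply Hvars. constructor; auto.
      * intros Y w Hw. apply Hcvars. constructor; auto.
      * split; [|split]; [apply hG1|apply hG0|]; auto. exists o, cs, o', ds. auto.
    + inversion HN; subst. clear HN. apply asubtree_ann in Hs2.
      destruct Hs2 as [[l cs'] [Hg' Hg'e]]. simpl in Hg'e. inversion Hg'e; subst. clear Hg'e.
      rewrite map_map in Hin. apply in_map_iff in Hin.
      destruct Hin as [[[h|] ds2] [Hc Hc2]]; simpl in Hc.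
      * inversion Hc; subst. apply Hni. exists p; auto.
      * (* the child is the root of [s t0], hanging below the last letter of [s X] *)
        destruct (Hcvars X t0 (st_refl _)) as [_ Hpair]. apply (Hpair _ Hf).
        -- exists cs', ds2. auto.
        -- exists a. split; auto. rewrite <- (aroot_aeval s (p ++ [0])), Hc. reflexivity.
  - rewrite aeval_App in Hsub. rewrite Forall_forall in IH.
    inversion Hsub as [|? ? ? ? ? H1 H2]; subst.
    + apply In_aeval_args in Hin. destruct Hin as [j [t [Ht Hc]]].
      destruct t as [x|Y w|g' ts'].
      * simpl in Hc. destruct (sx s x) as [l2 cs2] eqn:E. simpl in Hc. inversion Hc; subst.
        apply (Hvars x (st_app _ _ Ht (st_refl _))). exists a. rewrite E. auto.
      * destruct (Hcvars Y w (st_app _ _ Ht (st_refl _))) as [HY _].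
        destruct (gctx_root (proj1 Hv Y) HY) as [h [cs2 [E Hh]]].
        simpl in Hc. rewrite E in Hc. simpl in Hc. inversion Hc; subst.
        rewrite (hG0 Ha) in Hh. lia.
      * simpl in Hc. inversion Hc; subst. apply Hne. split; auto.
    + apply In_aeval_args in H1. destruct H1 as [j [t1 [Ht ->]]].
      apply (IH t1 Ht (p ++ [j])) with f a; auto.
      * intros x Hx. apply Hvars. econstructor; eauto.
      * intros Y w Hw. apply Hcvars. econstructor; eauto.
      * split; [|split]; [apply hG1|apply hG0|]; auto. exists o, cs, o', ds. auto.
Qed.

(** * Completeness *)

Lemma const_rooted_apply s t : valid_subst ar s -> wf_t ar t ->
  (forall x, t = Var x -> ~ const_rooted (sx s x)) ->
  (forall Z w, t = CVar Z w -> sX s Z <> Omega L) ->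
  const_rooted (apply s t) -> exists a, G0 a /\ t = App a [].
Proof.
  intros Hv Hw Hx HZ [a [Ha Hr]]. destruct t as [x|Z w|a' ts].
  - exfalso. apply (Hx x eq_refl). exists a; auto.
  - exfalso. destruct (gctx_root (proj1 Hv Z) (HZ Z w eq_refl)) as [h [cs [E Hh]]].
    simpl in Hr. rewrite E in Hr. inversion Hr; subst. rewrite (hG0 Ha) in Hh. lia.
  - simpl in Hr. inversion Hr; subst. inversion Hw as [| |? ? Hl _]; subst.
    rewrite (hG0 Ha) in Hl. destruct ts; [eauto|discriminate].
Qed.

(* Invariant of step (2): [R] lists the context variables still to be processed and
   [nv] the variables introduced so far. *)
Record pop_invariant (A1 A2 : gtree L) (R : list nat) (e : eqn L) (s : subst L)
    (nv : list nat) : Prop := {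
  inv_valid : valid_subst ar s;
  inv_fst : apply s (fst e) = A1;
  inv_snd : apply s (snd e) = A2;
  inv_wf_fst : wf_t ar (fst e);
  inv_wf_snd : wf_t ar (snd e);
  inv_todo : forall X, In X R -> sX s X <> Omega L;
  inv_done : forall X t0, ~ In X R -> subterm_eq (CVar X t0) e -> cvar_safe s X t0;
  inv_vars : forall x, occurs_var x e -> ~ const_rooted (sx s x) \/ In x nv;
  inv_cvar_args : forall Y x, subterm_eq (CVar Y (Var x)) e -> ~ const_rooted (sx s x) }.

Section Invariant.
Variables (A1 A2 : gtree L) (R : list nat) (e : eqn L) (s : subst L) (nv : list nat).
Hypothesis Hinv : pop_invariant A1 A2 R e s nv.

Lemma inv_nonempty Z w : subterm_eq (CVar Z w) e -> sX s Z <> Omega L.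
Proof.
  intros Hs. destruct (in_dec Nat.eq_dec Z R) as [HZ|HZ].
  - apply (inv_todo Hinv); auto.
  - apply (inv_done Hinv HZ Hs).
Qed.

Lemma inv_const_arg X t0 : subterm_eq (CVar X t0) e -> const_rooted (apply s t0) ->
  exists a, G0 a /\ t0 = App a [].
Proof.
  intros Hs. apply const_rooted_apply.
  - apply (inv_valid Hinv).
  - apply wf_subterm_eq with e; [apply (inv_wf_fst Hinv)|apply (inv_wf_snd Hinv)|].
    eapply subterm_eq_trans; eauto. repeat constructor.
  - intros x ->. apply (inv_cvar_args Hinv Hs).
  - intros Z w ->. apply inv_nonempty with w. eapply subterm_eq_trans; eauto. repeat constructor.
Qed.

End Invariant.

Lemma keep_invariant A1 A2 X R e s nv c f L1 L2 :
  pop_invariant A1 A2 (X :: R) e s nv ->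
  sX s X = plug c (gnode (Some f) (L1 ++ Omega L :: L2)) ->
  (forall t, In t (L1 ++ L2) -> holes t = 0) ->
  ~ (G1 f /\ has_Xa G0 X e) -> pop_invariant A1 A2 R e s nv.
Proof.
  intros Hinv HX HL Hkeep. pose proof Hinv as [Hv Ha1 Ha2 Hw1 Hw2 HR Hdone Hvar Hcv].
  constructor; auto.
  - intros Y HY. apply HR. right; auto.
  - intros Y t0 HY Hs. destruct (Nat.eq_dec Y X) as [->|Hne].
    + split; [apply HR; left; auto|]. intros g Hg Hhp Hc.
      rewrite HX in Hhp. apply hole_parent_last_letter in Hhp; auto. subst g.
      destruct (inv_const_arg Hinv Hs Hc) as [a [Ha ->]].
      apply Hkeep. split; auto. exists a. auto.
    + apply Hdone; auto. intros [E|E]; auto.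
Qed.

Section PopCase.
Variables (A1 A2 : gtree L) (X : nat) (R : list nat) (e : eqn L) (s : subst L).
Variables (nv : list nat) (c : gtree L) (f : L) (L1 L2 : list (gtree L)).
Hypotheses (Hnd : NoDup (X :: R)) (Hinv : pop_invariant A1 A2 (X :: R) e s nv).
Hypotheses (HX : sX s X = plug c (gnode (Some f) (L1 ++ Omega L :: L2))) (Hc : is_gctx ar c).
Hypotheses (HL : forall t, In t (L1 ++ L2) -> is_gterm ar t)
  (Hlen : length L1 + S (length L2) = ar f).
Hypotheses (Hf : G1 f) (HXa : has_Xa G0 X e).

Let b0 := fresh_var e.
Let ys := seq b0 (length (L1 ++ L2)).
Let i := S (length L1).
(* X is removed exactly when popping the last letter empties [s X]. *)
Let rem := if Omega_dec c then true else false.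
Let s' := subst_after_pop s X c b0 (L1 ++ L2).
Let e' := map_eq (pop_rem rem X f i ys) e.

Lemma pop_case_step : pop_step ar G1 G0 X e ys e'.
Proof.
  exists f, rem, (map_eq (popX X f i ys) e). split.
  - left. split; auto. split; auto. exists i. unfold i, ys. rewrite length_seq, length_app.
    split; [lia|]. split; [lia|]. split; [apply seq_NoDup|]. split; auto.
    intros y Hy Ho. apply in_seq in Hy. apply occurs_var_lt_fresh in Ho. unfold b0 in Hy. lia.
  - unfold e', pop_rem. destruct rem; reflexivity.
Qed.

Lemma pop_case_apply t : subterm_eq t e -> apply s' (pop_rem rem X f i ys t) = apply s t.
Proof.
  intros Ht. apply (apply_pop_rem_after_pop (ar := ar)); auto.
  - apply (inv_valid Hinv).
  - unfold rem. destruct (Omega_dec c); auto. discriminate.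
  - intros x Hx. apply occurs_var_lt_fresh. eapply subterm_eq_trans; eauto.
Qed.

Lemma pop_case_invariant : pop_invariant A1 A2 R e' s' (nv ++ ys).
Proof.
  destruct Hinv as [Hv Ha1 Ha2 Hw1 Hw2 HR Hdone Hvar Hcv].
  assert (Hold : forall x, occurs_var x e -> sx s' x = sx s x).
  { intros x Hx. apply subst_after_pop_old_var, occurs_var_lt_fresh, Hx. }
  assert (Hother : forall Y, Y <> X -> sX s' Y = sX s Y) by apply subst_after_pop_other.
  assert (Hpopped : sX s' X = c) by apply subst_after_pop_popped.
  assert (Hi : 1 <= i <= ar f) by (unfold i; lia).
  assert (Hys : length ys = ar f - 1) by (unfold ys; rewrite length_seq, length_app; lia).
  constructor; try (unfold e'; cbn [fst snd map_eq]).
  - apply subst_after_pop_valid; auto.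
  - rewrite pop_case_apply; auto. left; constructor.
  - rewrite pop_case_apply; auto. right; constructor.
  - apply wf_pop_rem; auto.
  - apply wf_pop_rem; auto.
  - intros Y HY. rewrite Hother by (intros ->; inversion Hnd; auto).
    apply HR. right; auto.
  - intros Y t0 HY Hs. apply sub_pop_rem_eq_CVar in Hs.
    destruct Hs as [[-> [Hrem [t1 ->]]]|[Hne [t2 [Hs ->]]]].
    + (* the argument of X now starts with [f], which is not a constant *)
      unfold cvar_safe. rewrite Hpopped. split.
      * unfold rem in Hrem. destruct (Omega_dec c); [discriminate|auto].
      * intros g _ _ [a [Ha Hr]]. cbn [pop_arg apply root] in Hr. injection Hr as <-.
        apply hG0 in Ha. apply hG1 in Hf. lia.
    + unfold cvar_safe. rewrite Hother, pop_case_apply by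
        (auto; eapply subterm_eq_trans; eauto; repeat constructor).
      apply Hdone; auto. intros [E|E]; auto.
  - intros x Hx. rewrite in_app_iff. apply occurs_var_pop_rem in Hx.
    destruct Hx as [Hx|Hx]; auto. rewrite Hold; auto. destruct (Hvar x Hx); auto.
  - intros Y x Hs. apply sub_pop_rem_eq_CVar in Hs.
    destruct Hs as [[_ [_ [t1 E]]]|[_ [t2 [Hs E]]]]; [discriminate|].
    symmetry in E. apply pop_rem_Var in E. subst t2.
    rewrite Hold; [apply (Hcv Y x Hs)|]. eapply subterm_eq_trans; eauto. repeat constructor.
Qed.

End PopCase.

Lemma pop_invariant_step A1 A2 X R e s nv : NoDup (X :: R) ->
  pop_invariant A1 A2 (X :: R) e s nv ->
  exists nv1 e1 s1, pop_step ar G1 G0 X e nv1 e1 /\ pop_invariant A1 A2 R e1 s1 (nv ++ nv1).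
Proof.
  intros Hnd Hinv.
  assert (HXn : sX s X <> Omega L) by (apply (inv_todo Hinv); left; auto).
  destruct (gctx_last_letter (proj1 (inv_valid Hinv) X) HXn)
    as [c [f [L1 [L2 [HX [Hc [HL Hlen]]]]]]].
  destruct (classic (G1 f /\ has_Xa G0 X e)) as [[Hf HXa]|Hkeep].
  - eexists _, _, _. split.
    + eapply pop_case_step; eauto.
    + eapply pop_case_invariant; eauto.
  - exists [], e, s. split.
    + exists f, false, e. auto.
    + rewrite app_nil_r. eapply keep_invariant; eauto. intros t Ht. apply HL, Ht.
Qed.

Lemma pop_all_invariant A1 A2 R : NoDup R -> forall e s nv, pop_invariant A1 A2 R e s nv ->
  exists nv' e2 s2, pop_all ar G1 G0 R e nv' e2 /\ pop_invariant A1 A2 [] e2 s2 (nv ++ nv').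
Proof.
  induction R as [|X R IH]; intros Hnd e s nv Hinv.
  - exists [], e, s. split; [constructor|]. rewrite app_nil_r; auto.
  - destruct (pop_invariant_step Hnd Hinv) as [nv1 [e1 [s1 [Hst Hinv1]]]].
    assert (HndR : NoDup R) by (inversion Hnd; auto).
    destruct (IH HndR _ _ _ Hinv1) as [nv' [e2 [s2 [Hpa Hinv2]]]].
    exists (nv1 ++ nv'), e2, s2. split; [econstructor; eauto|]. rewrite app_assoc; auto.
Qed.

(* Steps (1) and (3) replace a variable by a constant exactly when the solution does. *)
Definition const_choice (g : gtree L) : option L :=
  match g with
  | gnode (Some c) [] => if excluded_middle_informative (G0 c) then Some c else None
  | _ => None
  end.

Definition consts_of (s : subst L) (x : nat) : option L := const_choice (sx s x).

Lemma const_choice_Some g c : const_choice g = Some c -> G0 c /\ g = gnode (Some c) [].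
Proof.
  destruct g as [[h|] [|z l]]; simpl; try discriminate.
  destruct (excluded_middle_informative (G0 h)); intros E; inversion E; subst; auto.
Qed.

Lemma const_choice_None g : is_gterm ar g -> const_choice g = None -> ~ const_rooted g.
Proof.
  intros [Hw _] Hc [a [Ha Hr]]. destruct g as [l cs]. simpl in Hr. subst l.
  inversion Hw as [|? ? Hl _]; subst. rewrite (hG0 Ha) in Hl. destruct cs; [|discriminate].
  simpl in Hc. destruct (excluded_middle_informative (G0 a)); [discriminate|contradiction].
Qed.

Lemma consts_of_G0 s x c : consts_of s x = Some c -> G0 c.
Proof. apply const_choice_Some. Qed.

Lemma apply_substV_consts_of s nv t :
  apply s (substV (restrict nv (consts_of s)) t) = apply s t.
Proof.
  apply apply_substV_id. intros x c E. unfold restrict in E.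
  destruct existsb; [apply const_choice_Some, E|discriminate].
Qed.

Lemma initial_invariant u v s : wf_t ar u -> wf_t ar v -> nonempty_solution ar s (u, v) ->
  pop_invariant (apply s u) (apply s v) (cvars_eq (u, v))
    (map_eq (substV (consts_of s)) (u, v)) s [].
Proof.
  intros Hu Hv [[Hvs _] Hne].
  assert (Happ : forall t, apply s (substV (consts_of s) t) = apply s t).
  { intros t. apply apply_substV_id. intros x c. apply const_choice_Some. }
  assert (Hvar : forall x, occurs_var x (map_eq (substV (consts_of s)) (u, v)) ->
            ~ const_rooted (sx s x)).
  { intros x Hx. apply occurs_var_substV in Hx. apply const_choice_None, Hx. apply Hvs. }
  assert (Hch : forall x c, consts_of s x = Some c -> ar c = 0).
  { intros x c E. eapply hG0, consts_of_G0, E. }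
  constructor; cbn [fst snd map_eq]; auto using wf_substV.
  - intros X HX. apply Hne, In_cvars_eq, HX.
  - intros X t0 HX Hs. exfalso. apply HX, In_cvars_eq.
    apply sub_substV_eq_CVar in Hs. destruct Hs as [t0' [Hs _]]. exists t0'. auto.
  - intros Y x Hs. apply Hvar. eapply subterm_eq_trans; eauto. repeat constructor.
Qed.

Section Final.
Variables (A : gtree L) (e : eqn L) (s : subst L) (nv : list nat).
Hypothesis Hinv : pop_invariant A A [] e s nv.
Let e' := map_eq (substV (restrict nv (consts_of s))) e.

Lemma final_cvar_safe X t0 : subterm_eq (CVar X t0) e' -> cvar_safe s X t0.
Proof.
  intros Hs. apply sub_substV_eq_CVar in Hs. destruct Hs as [t0' [Hs ->]].
  unfold cvar_safe. rewrite apply_substV_consts_of. apply (inv_done Hinv); auto.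
Qed.

Lemma final_var_not_const x : occurs_var x e' -> ~ const_rooted (sx s x).
Proof.
  intros Hx. apply occurs_var_substV in Hx. destruct Hx as [Hx Hch].
  destruct (inv_vars Hinv Hx) as [H|H]; auto.
  apply const_choice_None; [apply (inv_valid Hinv)|].
  unfold restrict in Hch. rewrite (proj2 (existsb_exists _ _)) in Hch; auto.
  exists x. split; auto. apply Nat.eqb_refl.
Qed.

Lemma final_nonempty_solution : nonempty_solution ar s e' /\ apply s (fst e') = A.
Proof.
  unfold e'. cbn [fst snd map_eq]. rewrite apply_substV_consts_of, (inv_fst Hinv).
  split; auto. split; [split; [apply (inv_valid Hinv)|]|].
  - cbn [fst snd map_eq]. rewrite !apply_substV_consts_of, (inv_fst Hinv), (inv_snd Hinv).
    reflexivity.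
  - intros X [t0 Hs]. apply (final_cvar_safe Hs).
Qed.

Lemma final_no_crossing : ~ (exists f a, G1 f /\ G0 a /\ crossing_pair ar s e' f a).
Proof.
  assert (Hsides : forall t, t = fst e' \/ t = snd e' -> vars_not_const s t /\ cvars_safe s t).
  { intros t Ht.
    split; [intros x Hx; apply final_var_not_const|intros X t0 Hs; apply final_cvar_safe];
      destruct Ht; subst t; [left|right|left|right]; auto. }
  intros [f [a [Hf [Ha [Hc|Hc]]]]];
    [destruct (Hsides (fst e'))|destruct (Hsides (snd e'))]; auto;
    eapply no_crossing_aeval; eauto; apply (inv_valid Hinv).
Qed.

End Final.

Lemma proc_complete u v s : wf_t ar u -> wf_t ar v -> nonempty_solution ar s (u, v) ->
  exists (u' v' : term L) (s' : subst L),
    proc ar G1 G0 (u, v) (u', v') /\ nonempty_solution ar s' (u', v') /\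
    apply s' u' = apply s u /\ ~ (exists f a, G1 f /\ G0 a /\ crossing_pair ar s' (u', v') f a).
Proof.
  intros Hu Hv Hs. pose proof (initial_invariant Hu Hv Hs) as Hinv.
  destruct Hs as [[_ Heq] _]. cbn [fst snd] in Heq. rewrite <- Heq in Hinv.
  destruct (pop_all_invariant (NoDup_nodup _ _) Hinv) as [nv [e2 [s2 [Hpa Hinv2]]]].
  cbn [app] in Hinv2. destruct (final_nonempty_solution Hinv2) as [Hsol Hfst].
  eexists _, _, s2.
  split; [|split; [exact Hsol|split; [exact Hfst|exact (final_no_crossing Hinv2)]]].
  exists (consts_of s), (cvars_eq (u, v)), (map_eq (substV (consts_of s)) (u, v)), e2, nv,
    (consts_of s2).
  repeat split; eauto using consts_of_G0, NoDup_nodup; apply In_cvars_eq.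
Qed.

End Procedure.

Theorem lemma5p3 (L : Type) (ar : L -> nat) (G1 G0 : L -> Prop)
  (hG1 : forall f, G1 f -> 1 <= ar f)
  (hG0 : forall c, G0 c -> ar c = 0)
  (u v : term L)
  (hu : wf_t ar u) (hv : wf_t ar v) :
  (forall u' v' : term L,
     proc ar G1 G0 (u, v) (u', v') ->
     (exists s' : subst L, solution ar s' (u', v')) ->
     exists s : subst L, solution ar s (u, v)) /\
  (forall s : subst L,
     nonempty_solution ar s (u, v) ->
     exists (u' v' : term L) (s' : subst L),
       proc ar G1 G0 (u, v) (u', v') /\
       nonempty_solution ar s' (u', v') /\
       apply s' u' = apply s u /\
       ~ (exists f a, G1 f /\ G0 a /\ crossing_pair ar s' (u', v') f a)).
Proof.
  split.
  - intros u' v'. eapply proc_sound; eauto.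
  - intros s Hs. eapply proc_complete; eauto.
Qed.
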